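(* Let $X$ be an exponential vector space over a field $K$. Every basis of $X\smallsetminus X_0$ is a maximal orderly independent subset of $X\smallsetminus X_0$, i.e. no orderly independent subset of $X\smallsetminus X_0$ properly contains it.
   Context: An exponential vector space (evs) over a field $K$ is a partially ordered set $(X,\leq)$ with a binary operation $+$ on $X$ and a map $K\times X\to X$, $(\alpha,x)\mapsto \alpha x$, such that: (A1) $(X,+)$ is a commutative semigroup with identity $\theta$; (A2) $x\leq y$ implies $x+z\leq y+z$ and $\alpha x\leq \alpha y$ for all $z\in X$, $\alpha\in K$; (A3) $\alpha(x+y)=\alpha x+\alpha y$, $\alpha(\beta x)=(\alpha\beta)x$, $(\alpha+\beta)x\leq \alpha x+\beta x$, $1x=x$; (A4) $\alpha x=\theta$ iff $\alpha=0$ or $x=\theta$; (A5) $x+(-1)x=\theta$ iff $x\in X_0$, where $X_0:=\{z\in X: y\not\leq z \text{ for all } y\in X\smallsetminus\{z\}\}$ (the set of minimal elements, called the primitive space; it is a vector space over $K$); (A6) for each $x\in X$ there is $p\in X_0$ with $p\leq x$. For $x\in X\smallsetminus X_0$ let $L(x):=\{z\in X: z\geq \alpha x+p \text{ for some } \alpha\in K\smallsetminus\{0\},\ p\in X_0\}$. A subset $B\subseteq X\smallsetminus X_0$ generates $X\smallsetminus X_0$ if $X\smallsetminus X_0=\bigcup_{b\in B}L(b)$. Elements $x,y\in X\smallsetminus X_0$ are orderly dependent if $x\in L(y)$ or $y\in L(x)$, and orderly independent otherwise; $B\subseteq X\smallsetminus X_0$ is orderly independent if any two distinct members of $B$ are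 orderly independent. A basis of $X\smallsetminus X_0$ is an orderly independent subset of $X\smallsetminus X_0$ that generates $X\smallsetminus X_0$. *)

From mathcomp Require Import all_boot all_order all_algebra.
Set Implicit Arguments. Unset Strict Implicit. Unset Printing Implicit Defensive.
Import GRing.Theory.
Local Open Scope ring_scope.

Section EVS.
Variable K : fieldType.

Record evs := EVS {
  carrier :> Type;
  le : carrier -> carrier -> Prop;
  add : carrier -> carrier -> carrier;
  smul : K -> carrier -> carrier;
  th : carrier;
  le_refl : forall x, le x x;
  le_antisym : forall x y, le x y -> le y x -> x = y;
  le_trans : forall x y z, le x y -> le y z -> le x z;
  addA : forall x y z, add x (add y z) = add (add x y) z;
  addC : forall x y, add x y = add y x;
  add0 : forall x, add x th = x;
  le_add : forall x y z, le x y -> le (add x z) (add y z);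
  le_smul : forall (a : K) x y, le x y -> le (smul a x) (smul a y);
  smulDr : forall (a : K) x y, smul a (add x y) = add (smul a x) (smul a y);
  smulA : forall (a b : K) x, smul a (smul b x) = smul (a * b) x;
  smulDl_le : forall (a b : K) x, le (smul (a + b) x) (add (smul a x) (smul b x));
  smul1 : forall x, smul 1 x = x;
  smul_eq_th : forall (a : K) x, smul a x = th <-> (a = 0 \/ x = th);
  primitive_ax : forall x, add x (smul (-1) x) = th <->
                   (forall y, le y x -> y = x);
  below_primitive : forall x, exists p, (forall y, le y p -> y = p) /\ le p x
}.

Variable X : evs.

Definition X0 (z : X) : Prop := forall y : X, le y z -> y = z.

Definition Lset (x : X) (z : X) : Prop :=
  exists (a : K) (p : X), a != 0 /\ X0 p /\ le (add (smul a x) p) z.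

Definition generates (B : X -> Prop) : Prop :=
  (forall b, B b -> ~ X0 b) /\
  (forall z, ~ X0 z <-> exists b, B b /\ Lset b z).

Definition orderly_dependent (x y : X) : Prop := Lset y x \/ Lset x y.

Definition orderly_independent_set (B : X -> Prop) : Prop :=
  (forall b, B b -> ~ X0 b) /\
  (forall x y, B x -> B y -> x <> y -> ~ orderly_dependent x y).

Definition is_basis (B : X -> Prop) : Prop :=
  orderly_independent_set B /\ generates B.

End EVS.

From mathcomp Require Import all_boot all_order all_algebra.
From Stdlib Require Import Classical.

Set Implicit Arguments.
Unset Strict Implicit.
Unset Printing Implicit Defensive.

Section OrderlyIndependence.
Variables (K : fieldType) (X : evs K).

Lemma orderly_independent_Lset_eq (C : X -> Prop) (x y : X) :
  orderly_independent_set C -> C x -> C y -> Lset y x -> x = y.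
Proof.
move=> [_ indepC] Cx Cy Lyx; apply: NNPP => neq_xy.
exact: (indepC x y Cx Cy neq_xy (or_introl Lyx)).
Qed.

End OrderlyIndependence.

Theorem mainTheorem19 (K : fieldType) (X : evs K) (B : X -> Prop) :
  is_basis B ->
  forall C : X -> Prop,
    orderly_independent_set C ->
    (forall x, B x -> C x) ->
    forall x, C x -> B x.
Proof.
move=> [_ [_ genB]] C indepC subBC x Cx.
have [b [Bb Lbx]] := proj1 (genB x) (indepC.1 x Cx).
by rewrite (orderly_independent_Lset_eq indepC Cx (subBC b Bb) Lbx).
Qed.
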